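(* Let $G$ be a finite nilpotent group and let $M,N$ be normal subgroups with $1<M\le N<G$ such that every $g\in G\setminus N$ is conjugate in $G$ to every element of $gM$. Then there is a prime $p$ such that both $M$ and $G/N$ are $p$-groups. *)

From mathcomp Require Import all_boot all_fingroup all_solvable.

From mathcomp Require Import all_boot all_fingroup all_solvable.
Set Implicit Arguments.
Unset Strict Implicit.
Unset Printing Implicit Defensive.

Local Open Scope group_scope.

(* Let r be a prime dividing |M| and g in G.  If the r'-part h of g were
   outside N, pick m in M of order r.  In a nilpotent group elements of
   coprime orders commute, so h * m, being conjugate to h, is an r'-element,
   and then so is m = h^-1 (h m): a contradiction.  Hence every r'-part lies
   in N, i.e. G / N is an r-group.  If two distinct primes r, s divided |M|,
   every g = g_r g_r' would lie in N (as g_r is its own s'-part), against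
   N < G; so M is an r-group as well. *)

Lemma nilpotent_coprime_commute (gT : finGroupType) (G : {group gT}) (x y : gT) :
  nilpotent G -> x \in G -> y \in G -> coprime #[x] #[y] -> commute x y.
Proof.
move=> nilG xG yG co_xy; apply/cent1P; rewrite -cent_cycle -cycle_subG.
by apply: sub_nilpotent_cent2 nilG _ _ _; rewrite ?cycle_subG // -!orderE coprime_sym.
Qed.

Lemma p_elt_mulKg (gT : finGroupType) (pi : nat_pred) (h m : gT) :
  commute h m -> pi.-elt h -> pi.-elt (h * m) -> pi.-elt m.
Proof.
move=> chm pi_h pi_hm; rewrite -(mulKg h m).
by apply: p_eltM; rewrite ?p_eltV // /commute mulKg chm mulgK.
Qed.

Section CosetsInConjugacyClasses.

Variables (gT : finGroupType) (G M N : {group gT}).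
Hypotheses (nilG : nilpotent G) (sMG : M \subset G).
Hypothesis conj_coset :
  forall g, g \in G :\: N -> forall m, m \in M -> g * m \in g ^: G.

Lemma constt_p'_mem r g : prime r -> r %| #|M| -> g \in G -> g.`_r^' \in N.
Proof.
move=> pr_r r_dvd_M gG; apply: contraT => hN.
set h := g.`_r^' in hN.
have hG : h \in G by rewrite groupX.
have r'h : r^'.-elt h := p_elt_constt _ _.
have [m mM o_m] := Cauchy pr_r r_dvd_M.
have chm : commute h m.
  apply: (nilpotent_coprime_commute nilG hG (subsetP sMG m mM)).
  by rewrite o_m coprime_sym (pnat_coprime (pnat_id pr_r)).
have r'hm : r^'.-elt (h * m).
  have hGN : h \in G :\: N by rewrite inE hN.
  by have /imsetP[x _ ->] := conj_coset hGN mM; rewrite p_eltJ.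
have := p_elt_mulKg chm r'h r'hm.
by rewrite /p_elt o_m pnatE // !inE eqxx.
Qed.

Lemma quotient_pgroup_of_dvd r : prime r -> r %| #|M| -> r.-group (G / N).
Proof.
move=> pr_r r_dvd_M; apply/pgroupP => s pr_s s_dvd_GN.
have [_ /morphimP[x nNx xG ->] o_x] := Cauchy pr_s s_dvd_GN.
have : (coset N x).`_r^' = 1.
  by rewrite -morph_constt //=; apply: coset_id; exact: constt_p'_mem.
by move/constt1P; rewrite p_eltNK /p_elt o_x pnatE.
Qed.

Lemma prime_dvd_card_uniq r s : N \proper G ->
  prime r -> r %| #|M| -> prime s -> s %| #|M| -> s = r.
Proof.
move=> ltNG pr_r r_dvd_M pr_s s_dvd_M; apply: contraTeq isT => s_neq_r.
have [_ [g gG gN]] := properP ltNG.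
have grG : g.`_r \in G by rewrite groupX.
have s'gr : s^'.-elt g.`_r.
  by apply: sub_p_elt (p_elt_constt r g) => q /eqP->; rewrite !inE eq_sym.
have grN : g.`_r \in N by rewrite -(constt_p_elt s'gr) constt_p'_mem.
by case/negP: gN; rewrite -(consttC r g) groupM // constt_p'_mem.
Qed.

End CosetsInConjugacyClasses.

Theorem mainTheorem14 (gT : finGroupType) (G M N : {group gT}) :
  nilpotent G -> M <| G -> N <| G ->
  M != 1%G -> M \subset N -> N \proper G ->
  (forall g, g \in G :\: N -> forall m, m \in M -> g * m \in g ^: G) ->
  exists p : nat, [/\ prime p, p.-group M & p.-group (G / N)].
Proof.
move=> nilG /andP[sMG _] _ ntM _ ltNG conj_coset.
have M_gt1 : 1 < #|M| by rewrite cardG_gt1.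
have pr_r := pdiv_prime M_gt1; have r_dvd_M := pdiv_dvd #|M|.
exists (pdiv #|M|); split=> //.
  apply/pgroupP => s pr_s s_dvd_M.
  apply/eqP; exact: (prime_dvd_card_uniq nilG sMG conj_coset ltNG pr_r r_dvd_M).
exact: (quotient_pgroup_of_dvd nilG sMG conj_coset).
Qed.
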